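(* Let $S$ be a numerical semigroup with minimal generators $a_1<a_2<\cdots<a_\nu$ such that $a_2>\frac{c(S)+\mu(S)}{3}$, $\nu(S)\ge10$, and $c(S)\equiv0\pmod{\mu(S)}$. Then $S$ satisfies Wilf's conjecture, i.e. $\nu(S)|L(S)|\ge c(S)$.
   Context: A numerical semigroup is a submonoid $S\subseteq\mathbb{N}$ with finite complement. $\nu(S)$ is the number of minimal generators, $\mu(S)=a_1$ the multiplicity, $c(S)$ the conductor (least integer with $c(S)+\mathbb{N}\subseteq S$), and $L(S)=\{x\in S:0\le x<c(S)\}$. *)

From mathcomp Require Import all_boot.
Set Implicit Arguments. Unset Strict Implicit. Unset Printing Implicit Defensive.

Definition numerical_semigroup (S : pred nat) : Prop :=
  S 0 /\ (forall x y, S x -> S y -> S (x + y)) /\ (exists N, forall x, N <= x -> S x).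

Definition is_conductor (S : pred nat) (c : nat) : Prop :=
  (forall x, c <= x -> S x) /\ (forall d, (forall x, d <= x -> S x) -> c <= d).

Definition minimal_generator (S : pred nat) (a : nat) : Prop :=
  S a /\ 0 < a /\ ~ (exists x y, 0 < x /\ 0 < y /\ S x /\ S y /\ a = x + y).

Definition min_gens_seq (S : pred nat) (gens : seq nat) : Prop :=
  sorted ltn gens /\ (forall a, a \in gens <-> minimal_generator S a).

Definition L_card (S : pred nat) (c : nat) : nat := count S (iota 0 c).

From mathcomp Require Import all_boot zify.
From Stdlib Require Import Classical.

(* Let m be the multiplicity, c = q m, and w_r (r < m) the Apéry set of S with
   respect to m.  The elements w_r + k m below c lie in L(S), so
   |L(S)| >= sum_r U_r with U_r = q - w_r / m, and U_0 = q.  An element of S that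
   is not a multiple of m is at least a_2, and w_r < c + m < 3 a_2; hence every
   w_r (r <> 0) is a minimal generator or a sum w_s + w_t of two of them, and then
   w_s / m + w_t / m <= q, i.e. U_s + U_t >= q.  Charging q to each such pair,
   a generator residue s is charged at most (number of generator residues) + 1
   <= nu times, so c = m q <= nu q + nu sum_{s generator} U_s <= nu |L(S)|.
   The hypothesis nu >= 10 is only used to know that S has a generator. *)

Set Implicit Arguments.
Unset Strict Implicit.
Unset Printing Implicit Defensive.

Lemma count_iota (P : pred nat) a n : count P (iota a n) = \sum_(i < n) P (a + i).
Proof.
elim: n a => [|n IHn] a; first by rewrite big_ord0.
rewrite big_ord_recl /= addn0 IHn; congr (_ + _).
by apply: eq_bigr => i _; rewrite addSnnS.
Qed.

Lemma count_iota_mul (P : pred nat) q m :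
  count P (iota 0 (q * m)) = \sum_(r < m) count (fun j => P (j * m + r)) (iota 0 q).
Proof.
elim: q => [|q IHq]; first by rewrite big1.
rewrite mulSnr iotaD count_cat IHq count_iota -big_split.
by apply: eq_bigr => r _; rewrite -[q.+1]addn1 iotaD count_cat /= add0n addn0.
Qed.

Lemma sorted_ltn_nth1_le (s : seq nat) x :
  sorted ltn s -> x \in s -> x != nth 0 s 0 -> nth 0 s 1 <= x.
Proof.
move=> s_sorted /(nthP 0) [[|i] i_lt <-]; first by rewrite eqxx.
have s_leq : sorted leq s by move: s_sorted; rewrite ltn_sorted_uniq_leq => /andP [].
by rewrite (sorted_leq_nth leq_trans leqnn 0 s_leq) // inE (leq_trans _ i_lt).
Qed.

Section MinimalGenerators.

Variable S : pred nat.

Lemma not_minimal_generator x : S x -> 0 < x -> ~ minimal_generator S x ->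
  exists y z, [/\ 0 < y, 0 < z, S y, S z & x = y + z].
Proof.
move=> Sx x_gt0 /not_and_or [//|/not_and_or [//|/NNPP [y [z [? [? [? [? ?]]]]]]]].
by exists y, z.
Qed.

Lemma minimal_generator_ind (P : nat -> Prop) :
  (forall a, minimal_generator S a -> P a) ->
  (forall y z, 0 < y -> 0 < z -> S y -> S z -> P y -> P z -> P (y + z)) ->
  forall x, S x -> 0 < x -> P x.
Proof.
move=> P_gen P_add; elim/ltn_ind => x IHx Sx x_gt0.
have [/P_gen //|/(not_minimal_generator Sx x_gt0)] := classic (minimal_generator S x).
move=> [y [z [y_gt0 z_gt0 Sy Sz x_eq]]]; rewrite x_eq.
by apply: P_add => //; apply: IHx => //; lia.
Qed.

Lemma nonmultiple_ge m b :
  (forall a, minimal_generator S a -> a %% m != 0 -> b <= a) ->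
  forall x, S x -> x %% m != 0 -> b <= x.
Proof.
move=> gen_ge x Sx; have [-> | x_gt0] := posnP x; first by rewrite mod0n.
move: x Sx x_gt0; apply: minimal_generator_ind => // y z _ _ _ _ IHy IHz.
have [y_m | /IHy] := eqVneq (y %% m) 0; last lia.
by rewrite -modnDml y_m add0n => /IHz; lia.
Qed.

End MinimalGenerators.

Section Apery.

Variables (S : pred nat) (c m : nat).
Hypotheses (S_conductor : forall x, c <= x -> S x) (m_gt0 : 0 < m).

Lemma apery_exists r : exists n, S n && (n %% m == r %% m).
Proof.
exists (c * m + r); rewrite modnMDl eqxx andbT S_conductor //.
exact: leq_trans (leq_pmulr c m_gt0) (leq_addr r _).
Qed.

Definition apery r := ex_minn (apery_exists r).

Lemma apery_mem r : S (apery r).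
Proof. by rewrite /apery; case: ex_minnP => n /andP []. Qed.

Lemma apery_mod r : apery r %% m = r %% m.
Proof. by rewrite /apery; case: ex_minnP => n /andP [_ /eqP]. Qed.

Lemma apery_min r n : S n -> n %% m = r %% m -> apery r <= n.
Proof. by rewrite /apery; case: ex_minnP => w _ w_min Sn /eqP n_r; apply/w_min/andP. Qed.

Lemma apery_ltn r : apery r < c + m.
Proof.
rewrite ltnNge; apply/negP => le_w.
suff: apery r <= apery r - m by lia.
apply: apery_min; first by apply: S_conductor; lia.
have le_mw : m <= apery r by lia.
by rewrite -(apery_mod r) -{2}(subnK le_mw) modnDr.
Qed.

Lemma apery_modn r : apery (r %% m) = apery r.
Proof.
by apply/eqP; rewrite eqn_leq !apery_min ?apery_mem // !apery_mod ?modn_mod.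
Qed.

Lemma apery_gt0 r : r %% m != 0 -> 0 < apery r.
Proof. by rewrite -apery_mod lt0n; apply: contraNneq => ->; rewrite mod0n. Qed.

Lemma apery_ord_inj : injective (fun r : 'I_m => apery r).
Proof.
move=> r1 r2 /(congr1 (modn^~ m)); rewrite !apery_mod !modn_small //.
exact: val_inj.
Qed.

Lemma apery_multiple_summand r x y : S y -> apery r = x + y -> x %% m = 0 -> x = 0.
Proof.
move=> Sy w_eq x_m; suff: apery r <= y by lia.
by apply: apery_min; rewrite // -(apery_mod r) w_eq -modnDml x_m.
Qed.

Hypotheses (S0 : S 0) (S_add : forall x y, S x -> S y -> S (x + y)) (S_m : S m).

Lemma apery0 : apery 0 = 0.
Proof. by apply/eqP; rewrite -leqn0 apery_min. Qed.

Lemma mulnm_mem k : S (k * m).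
Proof. by elim: k => [|k IHk]; rewrite ?mul0n // mulSn S_add. Qed.

Lemma apery_minimal_generator a :
  minimal_generator S a -> a %% m != 0 -> apery a = a.
Proof.
move=> [Sa [a_gt0 a_irr]] a_m; apply/eqP; rewrite eqn_leq apery_min //=.
rewrite leqNgt; apply/negP => lt_wa; apply: a_irr.
have d_m : m %| a - apery a by rewrite -eqn_mod_dvd ?apery_mod // ltnW.
exists (apery a), (a - apery a); rewrite apery_gt0 // subn_gt0 lt_wa apery_mem.
by rewrite -(divnK d_m) mulnm_mem (divnK d_m) subnKC // ltnW.
Qed.

Lemma count_apery_residue q r : r < m ->
  q - apery r %/ m <= count (fun j => S (j * m + r)) (iota 0 q).
Proof.
move=> r_lt; set k := apery r %/ m.
have [le_qk | lt_kq] := leqP q k; first by move: le_qk; rewrite -subn_eq0 => /eqP ->.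
rewrite -(subnKC (ltnW lt_kq)) iotaD count_cat add0n addKn.
apply: leq_trans (leq_addl _ _); rewrite -{1}(size_iota k (q - k)) -count_predT.
apply/eq_leq/eq_in_count => j; rewrite mem_iota => /andP [le_kj _] /=.
have -> : j * m + r = (j - k) * m + apery r.
  by rewrite {1}(divn_eq (apery r) m) -/k apery_mod modn_small // addnA -mulnDl subnK.
by rewrite S_add ?mulnm_mem ?apery_mem.
Qed.

Lemma sum_apery_le_L_card q : c = q * m -> \sum_(r < m) (q - apery r %/ m) <= L_card S c.
Proof.
move=> ->; rewrite /L_card count_iota_mul.
by apply: leq_sum => r _; apply: count_apery_residue.
Qed.

End Apery.

Section SumsetCharging.

Variables (I : finType) (w : I -> nat) (G D : {set I}) (U : I -> nat).
Hypothesis w_inj : injective w.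

Lemma sum_bool_card (b : pred I) : \sum_(r in D) b r = #|[set r in D | b r]|.
Proof.
by rewrite -sum1dep_card big_mkcondr /=; apply: eq_bigr => r _; case: (b r).
Qed.

Section Pairs.

Variables al be : I -> I.
Hypothesis pairP :
  forall r, r \in D -> [/\ al r \in G, be r \in G & w r = w (al r) + w (be r)].

Lemma pair_incidence_le s : \sum_(r in D) ((al r == s) + (be r == s)) <= #|G|.+1.
Proof.
(* Pairs containing s are told apart by their other member; only one is (s, s). *)
have -> : \sum_(r in D) ((al r == s) + (be r == s)) =
    \sum_(r in D) ((al r == s) || (be r == s)) + \sum_(r in D) ((al r == s) && (be r == s)).
  by rewrite -big_split; apply: eq_bigr => r _; case: (al r == s); case: (be r == s).
rewrite !sum_bool_card -addn1 leq_add //.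
  pose other r := if al r == s then be r else al r.
  have w_other r : r \in [set r in D | (al r == s) || (be r == s)] -> w r = w s + w (other r).
    rewrite inE => /andP [/pairP [_ _ ->]]; rewrite /other.
    by case: eqP => [-> // | _] /= /eqP ->; rewrite addnC.
  rewrite -(card_in_imset (f := other)); last first.
    by move=> r1 r2 r1_in r2_in e; apply: w_inj; rewrite (w_other r1) // (w_other r2) // e.
  apply/subset_leq_card/subsetP => _ /imsetP [r + ->].
  by rewrite inE /other => /andP [/pairP [? ? _] _]; case: ifP.
apply/card_le1_eqP => r1 r2; rewrite !inE.
move=> /andP [/pairP [_ _ e1] /andP [/eqP a1 /eqP b1]].
move=> /andP [/pairP [_ _ e2] /andP [/eqP a2 /eqP b2]].
by apply: w_inj; rewrite e1 e2 a1 b1 a2 b2.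
Qed.

Lemma sum_pair_le : \sum_(r in D) (U (al r) + U (be r)) <= #|G|.+1 * \sum_(s in G) U s.
Proof.
have U_pick x : x \in G -> U x = \sum_(s in G) U s * (x == s).
  move=> x_G; rewrite (bigD1 x) //= eqxx muln1 big1 ?addn0 // => s /andP [_].
  by rewrite eq_sym => /negbTE ->; rewrite muln0.
rewrite (eq_bigr (fun r => \sum_(s in G) U s * ((al r == s) + (be r == s)))); last first.
  move=> r /pairP [al_G be_G _]; rewrite (U_pick _ al_G) (U_pick _ be_G) -big_split.
  by apply: eq_bigr => s _; rewrite mulnDr.
rewrite (exchange_big addn) big_distrr /=; apply: leq_sum => s _.
by rewrite -big_distrr mulnC leq_mul ?pair_incidence_le.
Qed.

End Pairs.

Lemma sum_le_sumset (V : I -> nat) :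
  (forall r, r \in D ->
     exists s t, [/\ s \in G, t \in G, w r = w s + w t & V r <= U s + U t]) ->
  \sum_(r in D) V r <= #|G|.+1 * \sum_(s in G) U s.
Proof.
move=> decomp.
pose pairb r (st : I * I) :=
  [&& st.1 \in G, st.2 \in G, w r == w st.1 + w st.2 & V r <= U st.1 + U st.2].
pose st r := odflt (r, r) [pick st | pairb r st].
have st_pair r : r \in D -> pairb r (st r).
  move=> /decomp [s [t [s_G t_G w_eq V_le]]]; rewrite /st.
  case: pickP => [st' //|/(_ (s, t))]; by rewrite /pairb s_G t_G w_eq eqxx V_le.
apply: leq_trans (sum_pair_le (al := fun r => (st r).1) (be := fun r => (st r).2) _).
  by apply: leq_sum => r /st_pair /and4P [].
by move=> r /st_pair /and4P [? ? /eqP ? _].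
Qed.

End SumsetCharging.

Section WilfApery.

Variables (S : pred nat) (c m b : nat) (gens : seq nat).
Hypotheses (S0 : S 0) (S_add : forall x y, S x -> S y -> S (x + y))
  (S_conductor : forall x, c <= x -> S x)
  (gensP : forall a, a \in gens <-> minimal_generator S a) (m_gens : m \in gens)
  (c_mod : c %% m = 0) (b_large : c + m < 3 * b)
  (nonmultiple_ge_b : forall x, S x -> x %% m != 0 -> b <= x).

Let m_gen : minimal_generator S m := (gensP m).1 m_gens.
Let S_m : S m := m_gen.1.
Let m_gt0 : 0 < m := m_gen.2.1.
Let w := apery S_conductor m_gt0.
Let q := c %/ m.
Let U r := q - w r %/ m.
Let G := [set r : 'I_m | w r \in gens].
Let D := [set r : 'I_m | (0 < r) && (w r \notin gens)].

Let w_inj : injective (fun r : 'I_m => w r) :=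
  apery_ord_inj (S_conductor:=S_conductor) (m_gt0:=m_gt0).

Let c_eq : c = q * m.
Proof. by rewrite divnK // /dvdn c_mod. Qed.

Lemma apery_sum_two_generators r : r %% m != 0 -> ~ minimal_generator S (w r) ->
  exists a a', [/\ minimal_generator S a, minimal_generator S a', a %% m != 0,
                   a' %% m != 0 & w r = a + a'].
Proof.
move=> r_m w_ngen.
have summand_nonmultiple x x' : S x' -> w r = x + x' -> 0 < x -> x %% m != 0.
  by move=> Sx' w_eq x_gt0; apply/eqP => /(apery_multiple_summand Sx' w_eq); lia.
have summand_ge x x' : S x -> S x' -> w r = x + x' -> 0 < x -> b <= x.
  by move=> Sx Sx' w_eq x_gt0; apply/nonmultiple_ge_b/(summand_nonmultiple x x').
have summand_gen x x' :
    S x -> S x' -> w r = x + x' -> 0 < x -> 0 < x' -> minimal_generator S x.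
  move=> Sx Sx' w_eq x_gt0 x'_gt0; apply: NNPP => /(not_minimal_generator Sx x_gt0).
  (* otherwise w r would be a sum of three nonzero elements, each at least b *)
  move=> [x1 [x2 [x1_gt0 x2_gt0 Sx1 Sx2 x_eq]]].
  have := summand_ge x1 (x2 + x') Sx1 (S_add Sx2 Sx') ltac:(lia) x1_gt0.
  have := summand_ge x2 (x1 + x') Sx2 (S_add Sx1 Sx') ltac:(lia) x2_gt0.
  have := summand_ge x' x Sx' Sx ltac:(lia) x'_gt0.
  have := apery_ltn S_conductor m_gt0 r; rewrite -/w; lia.
have [y [z [y_gt0 z_gt0 Sy Sz w_eq]]] :=
  not_minimal_generator (apery_mem _ _ r) (apery_gt0 _ _ r_m) w_ngen.
have w_eq' : w r = z + y by rewrite addnC.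
exists y, z; split => //.
- exact: summand_gen Sy Sz w_eq y_gt0 z_gt0.
- exact: summand_gen Sz Sy w_eq' z_gt0 y_gt0.
- exact: summand_nonmultiple Sz w_eq y_gt0.
- exact: summand_nonmultiple Sy w_eq' z_gt0.
Qed.

Lemma card_generator_residues : #|G|.+1 <= size gens.
Proof.
have w_neq_m (r : 'I_m) : w r != m.
  apply/eqP => w_m; have := apery_mod S_conductor m_gt0 r; rewrite -/w w_m modnn.
  by rewrite modn_small // => r0; move: w_m; rewrite -r0 /w apery0 //; lia.
suff: size (m :: [seq w (val r) | r <- enum G]) <= size gens by rewrite /= size_map -cardE.
apply: uniq_leq_size => [|x].
  rewrite /= map_inj_uniq ?enum_uniq ?andbT; last exact: w_inj.
  by apply/mapP => [[r _ /eqP]]; rewrite eq_sym (negbTE (w_neq_m r)).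
by rewrite inE => /predU1P [-> // | /mapP [r]]; rewrite mem_enum inE => r_G ->.
Qed.

Lemma sum_nongenerator_residues : \sum_(r in D) q <= #|G|.+1 * \sum_(r in G) U r.
Proof.
apply: (sum_le_sumset (U := fun r : 'I_m => U r) (V := fun=> q) w_inj) => r.
rewrite inE => /andP [r_gt0 w_ngen].
have r_m : r %% m != 0 by rewrite modn_small // -lt0n.
have [a [a' [a_gen a'_gen a_m a'_m w_eq]]] :=
  apery_sum_two_generators r_m (fun r_gen => negP w_ngen ((gensP _).2 r_gen)).
have w_res x : minimal_generator S x -> x %% m != 0 -> w (Ordinal (ltn_pmod x m_gt0)) = x.
  by move=> x_gen x_m; rewrite /w /= apery_modn apery_minimal_generator.
exists (Ordinal (ltn_pmod a m_gt0)), (Ordinal (ltn_pmod a' m_gt0)).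
rewrite !inE /U !w_res //; split; [exact/gensP | exact/gensP | exact: w_eq |].
have : (a + a') %/ m < q.+1 by rewrite ltn_divLR // mulSn -c_eq (addnC m) -w_eq apery_ltn.
by rewrite divnD //; lia.
Qed.

Lemma wilf_inequality : c <= size gens * L_card S c.
Proof.
pose r0 := Ordinal m_gt0.
have w_r0 : w r0 = 0 by apply: apery0.
have r0_G : r0 \notin G by rewrite inE w_r0; apply/negP => /gensP [_ []].
have sum_split f : \sum_(r < m) f r = f r0 + \sum_(r in G) f r + \sum_(r in D) f r.
  rewrite (bigD1 r0) //= (bigID (mem G)) /= addnA.
  congr (_ + _ + _); apply: eq_bigl => r.
    by case: (eqVneq r r0) => [-> | _]; rewrite ?(negbTE r0_G).
  by rewrite !inE lt0n.
have c_sum : c = \sum_(r < m) q by rewrite sum_nat_const card_ord mulnC c_eq.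
have L_ge : \sum_(r < m) U r <= L_card S c by apply: sum_apery_le_L_card.
apply: leq_trans (leq_mul (leqnn _) L_ge).
rewrite c_sum !sum_split /U w_r0 div0n subn0 sum_nat_const.
have := sum_nongenerator_residues; have := card_generator_residues; rewrite /U.
move: (size gens) #|G| (\sum_(r in D) q) (\sum_(r in G) _) (\sum_(r in D) _).
move=> n g x y z g_lt x_le; have := leq_mul g_lt (leqnn (q + y)); nia.
Qed.

End WilfApery.

Theorem proposition4p7 (S : pred nat) (c : nat) (gens : seq nat) :
  numerical_semigroup S ->
  is_conductor S c ->
  min_gens_seq S gens ->
  3 * nth 0 gens 1 > c + nth 0 gens 0 ->
  10 <= size gens ->
  c %% nth 0 gens 0 = 0 ->
  size gens * L_card S c >= c.
Proof.
move=> [S0 [S_add _]] [S_conductor _] [gens_sorted gensP] a2_large gens_size c_mod.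
have m_gens : nth 0 gens 0 \in gens by apply/mem_nth/(leq_trans _ gens_size).
apply: (wilf_inequality (b := nth 0 gens 1) S0 S_add S_conductor gensP m_gens c_mod a2_large).
apply: nonmultiple_ge => a /gensP a_gens a_m; apply: sorted_ltn_nth1_le => //.
by apply: contra a_m => /eqP ->; rewrite modnn.
Qed.
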